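(* Let $\Sigma\subset\mathbb{R}^{n+1}$ be a pure, hereditary, $(n+1)$-dimensional fan with smoothness parameters $\alpha$, let $\Sigma'\subseteq\Sigma$ be a subfan, and let $W\subseteq\mathbb{R}^{n+1}$ be a linear subspace with $W\subseteq\bigcap_{\tau\in\Sigma_n\setminus\Sigma'_n}\mathrm{aff}(\tau)$. Then for every $i$, every associated prime $P$ of the $S$-module $H_i(\mathcal{R}/\mathcal{J}[\Sigma,\Sigma'])$ satisfies $P\subseteq I(W)$.
   Context: $S=\mathbb{R}[x_0,\ldots,x_n]$; $I(W)$ is the ideal of polynomials vanishing on $W$. A cone is the positive hull of finitely many vectors, of dimension that of its linear span $\mathrm{aff}(\gamma)$; a fan is a finite set of cones closed under faces, any two meeting in a common face; $\Sigma_i$ = $i$-dim cones, facets = maximal cones; pure: all facets of dim $n+1$; hereditary: for every face $\psi$ the graph on facets containing $\psi$ with edges for pairs meeting in an $n$-face is connected; $\partial\Sigma$ = subfan of faces contained in an $n$-face lying in exactly one facet; others interior. $l_\tau$ generates the ideal of $\mathrm{aff}(\tau)$. Smoothness parameters: integers $\alpha(\tau)\ge-1$ ($\tau\in\Sigma_n$), $\ge0$ on interior $\tau$; $\Sigma^{-1}$ = subfan of $\partial\Sigma$ of cones contained in some $\tau$ with $\alpha(\tau)=-1$; $J(\tau)=\langle l_\tau^{\alpha(\tau)+1}\rangle$ for $\tau\in\Sigma_n\setminus\Sigma^{-1}_n$, $J(\gamma)=\sum_{\tau\in\Sigma_n\setminus\Sigma^{-1}_n,\gamma\subseteq\tau}J(\tau)$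 for non-facets, $J(\sigma)=0$ for facets. With $u_\rho$ unit ray generators, $P(\gamma)=\mathrm{conv}(\{0\}\cup\{u_\rho:\rho\subseteq\gamma\})$, $\mathrm{lk}(\gamma)=\mathrm{conv}\{u_\rho\}$; $\mathcal{R}[\Sigma,\Sigma']_i=\bigoplus_{\gamma\in\Sigma_i\setminus\Sigma'_i}S$ with differential the cellular boundary of the relative cellular chain complex of $(P(\Sigma),\mathrm{lk}(\Sigma)\cup P(\Sigma'))$ with $S$ coefficients; $\mathcal{R}/\mathcal{J}[\Sigma,\Sigma']_i=\bigoplus_{\gamma\in\Sigma_i\setminus\Sigma'_i}S/J(\gamma)$ is the induced quotient complex. *)

From HB Require Import structures.
From mathcomp Require Import all_boot all_order all_algebra.
From mathcomp Require Import boolp reals.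
From mathcomp Require Import mpoly.
From Stdlib Require Import Relations.

Set Implicit Arguments.
Unset Strict Implicit.
Unset Printing Implicit Defensive.

Import Order.TTheory GRing.Theory Num.Theory.
Local Open Scope ring_scope.

Section FanDefs.
Variable R : realType.
Variable n : nat.

Notation vec := 'rV[R]_(n.+1).
Notation S := {mpoly R[n.+1]}.

Definition dotv (x y : vec) : R := (x *m y^T) 0 0.

Definition in_cone (gs : seq vec) (x : vec) : Prop :=
  exists c : 'I_(size gs) -> R,
    (forall j, 0 <= c j) /\ x = \sum_(j < size gs) c j *: nth 0 gs j.

(* matrix whose rows are the generators: its row space is aff(gamma) *)
Definition conemx (gs : seq vec) : 'M[R]_(size gs, n.+1) :=
  \matrix_(i < size gs, j < n.+1) (nth 0 gs i) 0 j.

Definition in_aff (gs : seq vec) (x : vec) : Prop := (x <= conemx gs)%MS.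

Definition cdim (gs : seq vec) : nat := \rank (conemx gs).

Variable I : finType.
Variable gens : I -> seq vec.

Definition subc (a b : I) : Prop :=
  forall x, in_cone (gens a) x -> in_cone (gens b) x.

Definition is_face_of (c a : I) : Prop :=
  exists w : vec, (forall x, in_cone (gens a) x -> 0 <= dotv w x) /\
    (forall x, in_cone (gens c) x <-> (in_cone (gens a) x /\ dotv w x = 0)).

(* Sigma = { cone (gens a) | a : I } is a fan of pointed cones,
   listed without repetition *)
Definition is_fan : Prop :=
  [/\ (forall a b, (forall x, in_cone (gens a) x <-> in_cone (gens b) x) -> a = b),
      (forall a x, in_cone (gens a) x -> in_cone (gens a) (- x) -> x = 0),
      (forall a (w : vec), (forall x, in_cone (gens a) x -> 0 <= dotv w x) ->
         exists b, forall x, in_cone (gens b) x <->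
                             (in_cone (gens a) x /\ dotv w x = 0)) &
      (forall a b, exists c,
         (forall x, in_cone (gens c) x <-> (in_cone (gens a) x /\ in_cone (gens b) x))
         /\ is_face_of c a /\ is_face_of c b)].

Definition fdim (a : I) : nat := cdim (gens a).

Definition maximal (s : I) : Prop := forall b, subc s b -> b = s.

Definition pure_full : Prop :=
  (exists s, fdim s = n.+1) /\ (forall s, maximal s -> fdim s = n.+1).

Definition adjacent (psi : I) (a b : I) : Prop :=
  [/\ maximal a, maximal b, subc psi a, subc psi b &
      exists t, fdim t = n /\
        forall x, in_cone (gens t) x <-> (in_cone (gens a) x /\ in_cone (gens b) x)].

Definition hereditary : Prop :=
  forall psi s1 s2, maximal s1 -> maximal s2 -> subc psi s1 -> subc psi s2 ->
    clos_refl_trans I (adjacent psi) s1 s2.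

Definition bdry_nface (t : I) : Prop :=
  fdim t = n /\ exists s, [/\ maximal s, subc t s &
                             forall s', maximal s' -> subc t s' -> s' = s].

Definition in_bdry (g : I) : Prop := exists t, bdry_nface t /\ subc g t.

Definition smoothness_params (alpha : I -> int) : Prop :=
  forall t, fdim t = n -> (-1 <= alpha t) /\ (~ in_bdry t -> 0 <= alpha t).

Definition subfan (Sp : I -> Prop) : Prop :=
  forall a b, Sp a -> subc b a -> Sp b.

Variable alpha : I -> int.

Definition sigma_m1 (g : I) : Prop :=
  in_bdry g /\ exists t, [/\ fdim t = n, alpha t = -1 & subc g t].

Definition gen_ideal_aff (t : I) (l : S) : Prop :=
  forall f : S, (forall x, in_aff (gens t) x -> f.@[fun j => x 0 j] = 0) <->
                exists g, f = g * l.

Definition J_nface (t : I) (f : S) : Prop :=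
  exists l g, gen_ideal_aff t l /\ f = g * l ^+ absz (alpha t + 1).

Definition J_rel (g t : I) : Prop := [/\ fdim t = n, ~ sigma_m1 t & subc g t].

Definition J_mem (g : I) (f : S) : Prop :=
  (maximal g -> f = 0) /\
  (~ maximal g -> exists h : I -> S, (forall t, J_rel g t -> J_nface t (h t)) /\
                   f = \sum_(t | `[< J_rel g t >]) h t).

Definition orient (a : I) : seq vec :=
  [seq row i (row_base (conemx (gens a))) | i <- enum 'I_(\rank (conemx (gens a)))].

Definition pairdet (A B : seq vec) : R :=
  \det (\matrix_(i < size A, j < size A) dotv (nth 0 A i) (nth 0 B j)).

Definition relint_pt (a : I) : vec := \sum_(v <- gens a) v.

(* [P(a) : P(b)] for b a facet of a: compare the orientation of aff(a)
   with (orientation of aff(b), inward vector) *)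
Definition incid (a b : I) : R :=
  Num.sg (pairdet (rcons (orient b) (relint_pt a)) (orient a)).

Definition facet_of (b a : I) : Prop := subc b a /\ fdim a = (fdim b).+1.

Variable Sp : I -> Prop.

(* chains of R[Sigma,Sigma']_i, as functions I -> S *)
Definition chain_deg (i : nat) (c : I -> S) : Prop :=
  forall g, c g != 0 -> fdim g = i /\ ~ Sp g.

Definition bd (c : I -> S) (b : I) : S :=
  \sum_(a | `[< facet_of b a >]) incid a b *: c a.

Definition is_cycle (c : I -> S) : Prop :=
  forall b, ~ Sp b -> J_mem b (bd c b).

(* c represents 0 in H_i(R/J[Sigma,Sigma']) *)
Definition is_bdry (i : nat) (c : I -> S) : Prop :=
  exists d, chain_deg i.+1 d /\
    forall g, fdim g = i -> ~ Sp g -> J_mem g (c g - bd d g).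

Definition prime_ideal (P : S -> Prop) : Prop :=
  [/\ P 0, (forall f g, P f -> P g -> P (f + g)),
      (forall f g, P g -> P (f * g)), ~ P 1 &
      (forall f g, P (f * g) -> P f \/ P g)].

(* P is an associated prime of H_i(R/J[Sigma,Sigma']) : P = Ann([c]) *)
Definition assoc_prime (i : nat) (P : S -> Prop) : Prop :=
  prime_ideal P /\
  exists c, [/\ chain_deg i c, is_cycle c &
                forall g : S, P g <-> is_bdry i (fun a => g * c a)].

End FanDefs.

From HB Require Import structures.
From mathcomp Require Import all_boot all_order all_algebra.
From mathcomp Require Import boolp reals.
From mathcomp Require Import mpoly.
From mathcomp Require Import ring.
Set Implicit Arguments.
Unset Strict Implicit.
Unset Printing Implicit Defensive.

Import Order.TTheory GRing.Theory Num.Theory.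
Local Open Scope ring_scope.

(* Fix w in W with g(w) <> 0, and let P = Ann [c]. Substituting x |-> w + t (x - w) is a ring map
   S -> S[t] with value p at t = 1 and constant term p(w). Its t-coefficients preserve every J(tau)
   with w in aff(tau), since the line through w and a point of aff(tau) stays in aff(tau); hence
   they map boundaries to boundaries. The t^j-coefficient of g c is g(w) c_j plus a combination
   of the c_b, b < j, so by induction every c_j is a boundary, and so is c = sum_j c_j. Thus
   1 lies in P, which is absurd. *)

Lemma mpoly_rmorph_ext (R : nzRingType) (k : nat) (T : nzRingType)
    (f1 f2 : {rmorphism {mpoly R[k]} -> T}) :
  (forall c, f1 c%:MP = f2 c%:MP) -> (forall i, f1 'X_i = f2 'X_i) -> f1 =1 f2.
Proof.
move=> eqC eqX p; rewrite (mpolyE p) !raddf_sum; apply: eq_bigr => m _.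
rewrite -mul_mpolyC.
have rmorphM_coefX (f : {rmorphism {mpoly R[k]} -> T}) :
  f ((p@_m)%:MP * 'X_[m]) = f (p@_m)%:MP * f 'X_[m] := rmorphM f _ _.
apply: etrans (rmorphM_coefX f1) (etrans _ (esym (rmorphM_coefX f2))).
rewrite eqC mpolyXE_id !rmorph_prod; congr (_ * _).
by apply: eq_bigr => i _; rewrite !rmorphXn eqX.
Qed.

Lemma poly_eq0_eval (R : numDomainType) (q : {poly R}) :
  (forall x, q.[x] = 0) -> q = 0.
Proof.
move=> q0; apply: (@roots_geq_poly_eq0 _ q [seq j%:R | j <- iota 0 (size q)]).
- by apply/allP => _ /mapP [j _ ->]; rewrite /root q0.
- by rewrite map_inj_uniq ?iota_uniq // => a b /eqP; rewrite eqr_nat => /eqP.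
- by rewrite size_map size_iota.
Qed.

Section Contraction.
Variables (R : comNzRingType) (k : nat) (w : 'I_k -> R).
Notation S := {mpoly R[k]}.

(* [contract p] is p(w + t (X - w)) as a polynomial in t. *)
Definition contract (p : S) : {poly S} :=
  mmap (polyC \o @mpolyC k R) (fun i => ('X_i - (w i)%:MP)%:P * 'X + (w i)%:MP%:P) p.

HB.instance Definition _ := GRing.RMorphism.copy contract contract.

Lemma contractC c : contract c%:MP = c%:MP%:P.
Proof. exact: mmapC. Qed.

Lemma contractX i : contract 'X_i = ('X_i - (w i)%:MP)%:P * 'X + (w i)%:MP%:P.
Proof. by rewrite /contract mmapX mmap1U. Qed.

Lemma contract_eval1 p : (contract p).[1] = p.
Proof.
apply: (@mpoly_rmorph_ext _ _ _ (horner_eval 1 \o contract) idfun) => [c|i] /=.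
  by rewrite /horner_eval contractC hornerC.
by rewrite /horner_eval contractX !hornerE subrK.
Qed.

Lemma contract_meval (x : 'I_k -> R) (l : R) p :
  (map_poly (meval x) (contract p)).[l] = p.@[fun j => l * x j + (1 - l) * w j].
Proof.
apply: (@mpoly_rmorph_ext R k _ (horner_eval l \o map_poly (meval x) \o contract)
  (meval (fun j => l * x j + (1 - l) * w j))) => [c|i] /=.
  by rewrite (contractC c) /horner_eval map_polyC hornerC mevalC; apply: mevalC.
rewrite (contractX i) /horner_eval rmorphD rmorphM /= !map_polyC map_polyX.
by rewrite !hornerE /= mevalB !mevalXU !mevalC; ring.
Qed.

Definition contract_coef (j : nat) (p : S) : S := (contract p)`_j.

Lemma contract_coef_is_linear j : linear (contract_coef j).
Proof.
move=> r p q; rewrite /contract_coef -mul_mpolyC rmorphD rmorphM /= (contractC r).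
by rewrite coefD coefCM mul_mpolyC.
Qed.

HB.instance Definition _ j := GRing.isLinear.Build R S S *:%R (contract_coef j)
  (contract_coef_is_linear j).

Lemma contract_coefM j p q :
  contract_coef j (p * q) = \sum_(a < j.+1) contract_coef a p * contract_coef (j - a) q.
Proof. by rewrite /contract_coef rmorphM /= coefM. Qed.

Lemma contract_coef0 p : contract_coef 0 p = (p.@[w])%:MP.
Proof.
rewrite /contract_coef -horner_coef0.
apply: (@mpoly_rmorph_ext R k _ (horner_eval 0 \o contract) (@mpolyC k R \o meval w))
  => [c|i] /=.
  by rewrite (contractC c) /horner_eval hornerC mevalC.
by rewrite (contractX i) /horner_eval !hornerE mevalXU.
Qed.

Lemma sum_contract_coef K p : (size (contract p) <= K)%N ->
  \sum_(j < K) contract_coef j p = p.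
Proof.
move=> leK; rewrite -[RHS]contract_eval1 (horner_coef_wide _ leK).
by apply: eq_bigr => j _; rewrite expr1n mulr1.
Qed.

End Contraction.

Arguments contract {R k} w p.
Arguments contract_coef {R k} w j p.

Lemma contract_coef_vanish (R : numDomainType) (k : nat) (w : 'I_k -> R)
    (A : ('I_k -> R) -> Prop) (p : {mpoly R[k]}) :
  (forall x l, A x -> A (fun j => l * x j + (1 - l) * w j)) ->
  (forall x, A x -> p.@[x] = 0) ->
  forall j x, A x -> (contract_coef w j p).@[x] = 0.
Proof.
move=> A_line p0 j x Ax; rewrite /contract_coef -coef_map.
suff -> : map_poly (meval x) (contract w p) = 0 by rewrite coef0.
by apply: poly_eq0_eval => l; rewrite contract_meval p0 //; apply: A_line.
Qed.

Section Ideals.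
Variables (R : realType) (n : nat) (I : finType).
Variables (gens : I -> seq 'rV[R]_n.+1) (alpha : I -> int).
Notation S := {mpoly R[n.+1]}.

Lemma gen_ideal_aff_dvd t l l' :
  gen_ideal_aff gens t l -> gen_ideal_aff gens t l' -> exists u, l' = u * l.
Proof. by move=> gen_l gen_l'; apply/gen_l/gen_l'; exists 1; rewrite mul1r. Qed.

Lemma J_nfaceD t f f' :
  J_nface gens alpha t f -> J_nface gens alpha t f' -> J_nface gens alpha t (f + f').
Proof.
move=> [l [q [gen_l ->]]] [l' [q' [gen_l' ->]]].
have [u ->] := gen_ideal_aff_dvd gen_l gen_l'.
exists l, (q + q' * u ^+ absz (alpha t + 1)); split=> //.
by rewrite exprMn mulrA mulrDl.
Qed.

Lemma J_nfaceMl t p f : J_nface gens alpha t f -> J_nface gens alpha t (p * f).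
Proof. by move=> [l [q [gen_l ->]]]; exists l, (p * q); rewrite mulrA. Qed.

Lemma J_memD g f f' :
  J_mem gens alpha g f -> J_mem gens alpha g f' -> J_mem gens alpha g (f + f').
Proof.
move=> [f0 Jf] [f'0 Jf']; split=> [g_max|g_nmax]; first by rewrite f0 // f'0 // addr0.
have [h [Jh ->]] := Jf g_nmax; have [h' [Jh' ->]] := Jf' g_nmax.
exists (fun t => h t + h' t); split; last by rewrite big_split.
by move=> t rel_t; apply: J_nfaceD; [apply: Jh | apply: Jh'].
Qed.

Lemma J_memMl g p f : J_mem gens alpha g f -> J_mem gens alpha g (p * f).
Proof.
move=> [f0 Jf]; split=> [g_max|g_nmax]; first by rewrite f0 // mulr0.
have [h [Jh ->]] := Jf g_nmax; exists (fun t => p * h t).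
by split=> [t rel_t|]; [apply: J_nfaceMl; apply: Jh | rewrite mulr_sumr].
Qed.

Variable w : 'rV[R]_n.+1.
Local Notation wf := (fun j => w 0 j).

Lemma contract_gen_ideal_aff t l : (w <= conemx (gens t))%MS ->
  gen_ideal_aff gens t l -> exists U, contract wf l = U * l%:P.
Proof.
move=> w_aff gen_l.
have l_aff : forall x, in_aff (gens t) x -> l.@[fun j => x 0 j] = 0.
  by apply/(gen_l l); exists 1; rewrite mul1r.
have coef_dvd a : exists u, contract_coef wf a l = u * l.
  apply/(gen_l _) => x x_aff.
  apply: (@contract_coef_vanish _ _ _ (fun y => in_aff (gens t) (\row_j y j)))
    => [y s y_aff|y y_aff|].
  - have -> : \row_j (s * y j + (1 - s) * w 0 j) = s *: \row_j y j + (1 - s) *: w.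
      by apply/rowP => j; rewrite !mxE.
    by rewrite /in_aff addmx_sub // scalemx_sub.
  - by rewrite -(l_aff _ y_aff); apply: meval_eq => j; rewrite mxE.
  - by rewrite (_ : \row_j x 0 j = x) //; apply/rowP => j; rewrite mxE.
have [u uP] := choice coef_dvd.
exists (\poly_(a < size (contract wf l)) u a); apply/polyP => a.
rewrite coefMC coef_poly; case: ltnP => [_|le_size]; first exact: uP.
by rewrite mul0r nth_default.
Qed.

Lemma J_nface_contract_coef t f j : (w <= conemx (gens t))%MS ->
  J_nface gens alpha t f -> J_nface gens alpha t (contract_coef wf j f).
Proof.
move=> w_aff [l [q [gen_l ->]]].
have [U contract_l] := contract_gen_ideal_aff w_aff gen_l.
exists l, (contract wf q * U ^+ absz (alpha t + 1))`_j; split=> //.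
rewrite /contract_coef rmorphM rmorphXn /= contract_l exprMn -rmorphXn mulrA.
by rewrite coefMC.
Qed.

Lemma J_mem_contract_coef g f j :
  (forall t, J_rel gens alpha g t -> (w <= conemx (gens t))%MS) ->
  J_mem gens alpha g f -> J_mem gens alpha g (contract_coef wf j f).
Proof.
move=> w_aff [f0 Jf]; split=> [g_max|g_nmax]; first by rewrite f0 // raddf0.
have [h [Jh ->]] := Jf g_nmax; exists (fun t => contract_coef wf j (h t)).
split=> [t rel_t|]; last by rewrite raddf_sum.
by apply: J_nface_contract_coef; [apply: w_aff | apply: Jh].
Qed.

End Ideals.

Section Boundaries.
Variables (R : realType) (n : nat) (I : finType).
Variables (gens : I -> seq 'rV[R]_n.+1) (alpha : I -> int) (Sp : I -> Prop).
Notation S := {mpoly R[n.+1]}.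
Implicit Types c : I -> S.

Lemma bdD c c' b : bd gens (fun a => c a + c' a) b = bd gens c b + bd gens c' b.
Proof. by rewrite /bd -big_split; apply: eq_bigr => a _; rewrite scalerDr. Qed.

Lemma bdMl p c b : bd gens (fun a => p * c a) b = p * bd gens c b.
Proof. by rewrite /bd mulr_sumr; apply: eq_bigr => a _; rewrite scalerAr. Qed.

Lemma bd_linear (f : {linear S -> S}) c b :
  bd gens (fun a => f (c a)) b = f (bd gens c b).
Proof. by rewrite /bd linear_sum; apply: eq_bigr => a _; rewrite linearZ. Qed.

Variable i : nat.
Local Notation is_bdry := (is_bdry gens alpha Sp i).

Lemma eq_is_bdry {c c'} : is_bdry c -> c =1 c' -> is_bdry c'.
Proof.
by move=> [d [deg_d Jd]] eq_c; exists d; split=> // g *; rewrite -eq_c; apply: Jd.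
Qed.

Lemma is_bdryD c c' : is_bdry c -> is_bdry c' -> is_bdry (fun g => c g + c' g).
Proof.
move=> [d [deg_d Jd]] [d' [deg_d' Jd']]; exists (fun a => d a + d' a); split.
  move=> a; case: (eqVneq (d a) 0) => [-> | /deg_d //].
  by rewrite add0r; apply: deg_d'.
move=> g deg_g Sp_g; rewrite bdD opprD addrACA.
by apply: J_memD; [apply: Jd | apply: Jd'].
Qed.

Lemma is_bdryMl p c : is_bdry c -> is_bdry (fun g => p * c g).
Proof.
move=> [d [deg_d Jd]]; exists (fun a => p * d a); split.
  by move=> a pda; apply: deg_d; apply: contraNneq pda => ->; rewrite mulr0.
by move=> g deg_g Sp_g; rewrite bdMl -mulrBr; apply: J_memMl; apply: Jd.
Qed.

Lemma is_bdry0 c : is_bdry c -> is_bdry (fun _ => 0).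
Proof. by move=> /(is_bdryMl 0)/eq_is_bdry; apply=> g; rewrite mul0r. Qed.

Lemma is_bdry_sum (T : Type) (s : seq T) (F : T -> I -> S) :
  is_bdry (fun _ => 0) -> (forall x, is_bdry (F x)) ->
  is_bdry (fun g => \sum_(x <- s) F x g).
Proof.
move=> bdry0 bdryF; elim: s => [|x s IHs].
  by apply: (eq_is_bdry bdry0) => g; rewrite big_nil.
by apply: (eq_is_bdry (is_bdryD (bdryF x) IHs)) => g; rewrite big_cons.
Qed.

Variable w : 'rV[R]_n.+1.
Local Notation wf := (fun j => w 0 j).
Hypothesis w_aff :
  forall g t, ~ Sp g -> J_rel gens alpha g t -> (w <= conemx (gens t))%MS.

Lemma is_bdry_contract_coef j c :
  is_bdry c -> is_bdry (fun g => contract_coef wf j (c g)).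
Proof.
move=> [d [deg_d Jd]]; exists (fun a => contract_coef wf j (d a)); split.
  by move=> a cda; apply: deg_d; apply: contraNneq cda => ->; rewrite raddf0.
move=> g deg_g Sp_g; rewrite bd_linear -linearB.
by apply: J_mem_contract_coef => [t|]; [apply: w_aff | apply: Jd].
Qed.

Lemma is_bdry_cancel g c : g.@[wf] != 0 ->
  is_bdry (fun a => g * c a) -> is_bdry c.
Proof.
move=> gw_neq0 bdry_gc.
pose C j a := contract_coef wf j (c a).
have bdry0 := is_bdry0 bdry_gc.
have bdry_C j : is_bdry (C j).
  elim/ltn_ind: j => j IHj.
  have bdry_tail : is_bdry (fun a => \sum_(b < j)
      contract_coef wf (bump 0 b) g * C (j - bump 0 b)%N a).
    apply: is_bdry_sum => // b; apply: is_bdryMl; apply: IHj.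
    by case: j b => [[]|j b] //; rewrite subSS ltnS leq_subr.
  have := is_bdryD (is_bdry_contract_coef j bdry_gc) (is_bdryMl (-1) bdry_tail).
  move=> /(is_bdryMl (g.@[wf])^-1%:MP)/eq_is_bdry; apply=> a.
  rewrite contract_coefM big_ord_recl contract_coef0 subn0 mulN1r addrK.
  by rewrite mulrA -rmorphM mulVf // mul1r.
pose K := (\max_a size (contract wf (c a)))%N.
apply: (eq_is_bdry (is_bdry_sum (index_enum 'I_K) bdry0 (fun j : 'I_K => bdry_C j)))
  => a.
by apply: sum_contract_coef; apply: (@leq_bigmax _ (fun a => size (contract wf (c a)))).
Qed.

End Boundaries.

Theorem lemma5p2 (R : realType) (n : nat) (I : finType)
  (gens : I -> seq 'rV[R]_(n.+1)) (alpha : I -> int) (Sp : I -> Prop)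
  (W : 'M[R]_(n.+1)) :
  is_fan gens -> pure_full gens -> hereditary gens ->
  smoothness_params gens alpha -> subfan gens Sp ->
  (forall t, fdim gens t = n -> ~ Sp t -> (W <= conemx (gens t))%MS) ->
  forall (i : nat) (P : {mpoly R[n.+1]} -> Prop),
    assoc_prime gens alpha Sp i P ->
    forall g, P g -> forall w : 'rV[R]_(n.+1), (w <= W)%MS ->
      g.@[fun j => w 0 j] = 0.
Proof.
move=> _ _ _ _ Sp_subfan W_aff i P [[_ _ _ P1 _] [c [_ _ annP]]] g Pg w wW.
have [//|gw_neq0] := eqVneq (g.@[fun j => w 0 j]) 0.
case: P1; apply/annP.
have w_aff g' t : ~ Sp g' -> J_rel gens alpha g' t -> (w <= conemx (gens t))%MS.
  move=> Sp_g' [dim_t _ sub_t]; apply: submx_trans wW (W_aff t dim_t _) => Sp_t.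
  exact/Sp_g'/(Sp_subfan t).
have := is_bdry_cancel w_aff gw_neq0 ((annP g).1 Pg).
by move/eq_is_bdry; apply=> a; rewrite mul1r.
Qed.
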